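(* For every graph $G$ and every field $\mathbb{F}$, $\chi(G)\le 2$ if and only if $\overline{\xi}_l(G,\mathbb{F})\le 2$.
   Context: An orthogonal representation of $G=(V,E)$ over $\mathbb{F}$ assigns $u_v\in\mathbb{F}^t$ to each $v$ with $\langle u_v,u_v\rangle\ne0$ and $\langle u_v,u_{v'}\rangle=0$ for adjacent $v,v'$, where $\langle x,y\rangle=\sum_i x_iy_i$ (over $\mathbb{C}$ one may use $\sum_i x_i\overline{y_i}$). Its locality is $\max_v\dim\mathrm{span}\{u_{v'}:v'\in\{v\}\cup N(v)\}$. $\overline{\xi}_l(G,\mathbb{F})$ is the minimum locality of an orthogonal representation of $G$ over $\mathbb{F}$; $\chi(G)$ is the chromatic number. *)

From mathcomp Require Import all_boot all_order all_algebra.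
Set Implicit Arguments. Unset Strict Implicit. Unset Printing Implicit Defensive.
Import GRing.Theory.
Local Open Scope ring_scope.

Record graph (V : finType) := Graph {
  adj : rel V;
  adj_sym : symmetric adj;
  adj_irr : irreflexive adj }.

Definition colorable (V : finType) (G : graph V) (k : nat) : bool :=
  [exists f : {ffun V -> 'I_k}, [forall x, forall y, adj G x y ==> (f x != f y)]].

Lemma colorable_card (V : finType) (G : graph V) : exists k, colorable G k.
Proof.
exists #|V|; apply/existsP; exists [ffun x => enum_rank x].
apply/forallP => x; apply/forallP => y; apply/implyP => Hxy.
rewrite !ffunE; apply/negP => /eqP /enum_rank_inj Exy.
by move: Hxy; rewrite Exy (adj_irr G).
Qed.

Definition chromatic_number (V : finType) (G : graph V) : nat :=
  ex_minn (colorable_card G).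

Definition dotp (F : fieldType) (t : nat) (x y : 'rV[F]_t) : F :=
  \sum_(i < t) x 0 i * y 0 i.

Definition orth_rep (F : fieldType) (V : finType) (G : graph V) (t : nat)
    (u : V -> 'rV[F]_t) : Prop :=
  (forall v, dotp (u v) (u v) != 0) /\
  (forall v w, adj G v w -> dotp (u v) (u w) = 0).

Definition local_dim (F : fieldType) (V : finType) (G : graph V) (t : nat)
    (u : V -> 'rV[F]_t) (v : V) : nat :=
  \rank (\sum_(w | (w == v) || adj G v w) <<u w>>)%MS.

Definition locality (F : fieldType) (V : finType) (G : graph V) (t : nat)
    (u : V -> 'rV[F]_t) : nat :=
  (\max_(v : V) local_dim G u v)%N.

(* "xi_l(G,F) <= k": minimum locality of an orthogonal representation of G
   over F (in any dimension t) is at most k, i.e. some orthogonal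
   representation has locality at most k. *)
Definition xi_l_le (F : fieldType) (V : finType) (G : graph V) (k : nat) : Prop :=
  exists (t : nat) (u : V -> 'rV[F]_t), orth_rep G u /\ (locality G u <= k)%N.

From mathcomp Require Import all_boot all_order all_algebra.
Set Implicit Arguments. Unset Strict Implicit. Unset Printing Implicit Defensive.
Import GRing.Theory.
Local Open Scope ring_scope.

(* A proper k-colouring gives the orthogonal representation v |-> e_(colour v)
   in F^k, of locality at most k.  Conversely, if u has locality at most 2 and
   v is a vertex, then u_v is anisotropic and orthogonal to all neighbours of
   v inside a space of dimension at most 2, so all the u_w, w ~ v, are
   parallel.  Along any walk r, x1, x2, ... the vector of x_(i+2) is thus
   parallel to that of x_i, so every vertex of the component of r is parallel
   to u_r or to a fixed neighbour of r; adjacent vertices are never parallel,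
   and this dichotomy is a proper 2-colouring. *)

Section Dotp.
Variable F : fieldType.

Lemma dotp_delta n (i j : 'I_n) :
  dotp (delta_mx 0 i : 'rV[F]_n) (delta_mx 0 j) = (i == j)%:R.
Proof.
rewrite /dotp (bigD1 i) //= big1 => [|k /negbTE ki].
  by rewrite !mxE !eqxx /= mul1r addr0 (eq_sym i j).
by rewrite !mxE ki /= mul0r.
Qed.

Lemma dotp_eq0_kermx n (x y : 'rV[F]_n) : (dotp x y == 0) = (x <= kermx y^T)%MS.
Proof.
have -> : dotp x y = (x *m y^T) 0 0.
  by rewrite mxE; apply: eq_bigr => i _; rewrite mxE.
apply/idP/sub_kermxP => [/eqP xy0 | ->]; last by rewrite mxE.
by rewrite [x *m y^T]mx11_scalar xy0 raddf0.
Qed.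

Lemma rV_sub_sym n (x y : 'rV[F]_n) : x != 0 -> (x <= y)%MS -> (y <= x)%MS.
Proof.
move=> x0 xy; rewrite -(geq_leqif (mxrank_leqif_sup xy)).
by rewrite (rank_rV x) x0 rank_leq_row.
Qed.

(* In a space of dimension at most 2, the orthogonal complement of an
   anisotropic vector [a] has dimension at most 1. *)
Lemma orthogonal_rV_sub m n (S : 'M[F]_(m, n)) (a b c : 'rV[F]_n) :
  (\rank S <= 2)%N -> (a <= S)%MS -> (b <= S)%MS -> (c <= S)%MS ->
  dotp a a != 0 -> dotp b a = 0 -> dotp c a = 0 -> c != 0 -> (b <= c)%MS.
Proof.
move=> rS aS bS cS aa ba ca c0.
have bc_orth : (b + c <= kermx a^T)%MS.
  by rewrite addsmx_sub -!dotp_eq0_kermx ba ca eqxx.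
have a_bc : ~~ (a <= b + c)%MS.
  by apply: contra aa => abc; rewrite dotp_eq0_kermx (submx_trans abc bc_orth).
have rbc : (\rank (b + c) < 2)%N.
  have abcS : (a + (b + c) <= S)%MS by rewrite !addsmx_sub aS bS cS.
  apply: leq_trans (leq_trans (mxrankS abcS) rS).
  rewrite (ltn_leqif (mxrank_leqif_sup (addsmxSr a (b + c)%MS))).
  by rewrite addsmx_sub negb_and a_bc.
have : (\rank (b + c) <= \rank c)%N by rewrite (rank_rV c) c0.
by rewrite (geq_leqif (mxrank_leqif_sup (addsmxSr b c))) addsmx_sub => /andP[].
Qed.

End Dotp.

Section LocalityTwo.
Variables (F : fieldType) (V : finType) (G : graph V) (t : nat).
Variable u : V -> 'rV[F]_t.
Hypothesis u_orth : orth_rep G u.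
Hypothesis u_loc : (locality G u <= 2)%N.

Lemma orth_rep_neq0 x : u x != 0.
Proof. by apply: contraNneq (u_orth.1 x) => ->; rewrite dotp_eq0_kermx sub0mx. Qed.

Lemma orth_rep_par_sym x y : (u x <= u y)%MS -> (u y <= u x)%MS.
Proof. exact/rV_sub_sym/orth_rep_neq0. Qed.

Lemma orth_rep_adj_npar x y : adj G x y -> ~~ (u x <= u y)%MS.
Proof.
move=> xy; apply: contra (u_orth.1 y) => /orth_rep_par_sym yx.
by rewrite dotp_eq0_kermx (submx_trans yx) // -dotp_eq0_kermx (u_orth.2 _ _ xy).
Qed.

Lemma orth_rep_nbrs_par v w1 w2 :
  adj G v w1 -> adj G v w2 -> (u w2 <= u w1)%MS.
Proof.
move=> vw1 vw2.
set S := (\sum_(w | (w == v) || adj G v w) <<u w>>)%MS.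
have inS w : (w == v) || adj G v w -> (u w <= S)%MS.
  by move=> Hw; rewrite -genmxE (sumsmx_sup w).
apply: (@orthogonal_rV_sub _ _ _ S (u v)).
- exact: leq_trans (leq_bigmax (F := local_dim G u) v) u_loc.
- by rewrite inS ?eqxx.
- by rewrite inS ?vw2 ?orbT.
- by rewrite inS ?vw1 ?orbT.
- exact: u_orth.1.
- by apply: u_orth.2; rewrite adj_sym.
- by apply: u_orth.2; rewrite adj_sym.
- exact: orth_rep_neq0.
Qed.

Lemma path_last_par x p a b : path (adj G) x p -> (u x <= u a)%MS ->
  (forall w, adj G x w -> (u w <= u b)%MS) ->
  (u (last x p) <= u a)%MS \/ (u (last x p) <= u b)%MS.
Proof.
elim: p x a b => [|y p IHp] x a b /=; first by left.
move=> /andP[xy yp] xa x_nbrs.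
have y_nbrs w : adj G y w -> (u w <= u a)%MS.
  by move=> yw; apply: submx_trans xa; apply: orth_rep_nbrs_par yw; rewrite adj_sym.
by case: (IHp y b a yp (x_nbrs _ xy) y_nbrs); auto.
Qed.

Lemma connect_par a b z : connect (adj G) a z ->
  (forall w, adj G a w -> (u w <= u b)%MS) ->
  (u z <= u a)%MS \/ (u z <= u b)%MS.
Proof. by move=> /connectP[p ap ->]; apply: path_last_par. Qed.

Lemma locality2_colorable : colorable G 2.
Proof.
pose r z := fingraph.root (adj G) z.
pose s z := odflt (r z) [pick w | adj G (r z) w].
have connect_symG : connect_sym (adj G) by apply/sym_connect_sym/adj_sym.
have par_r_or_s z : (u z <= u (r z))%MS \/ (u z <= u (s z))%MS.
  apply: connect_par => [|w rw]; first by rewrite connect_symG connect_root.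
  rewrite /s; case: pickP => [w' rw'|/(_ w)]; last by rewrite rw.
  exact: orth_rep_nbrs_par rw' rw.
apply/existsP; exists [ffun z => if (u z <= u (r z))%MS then ord0 else ord_max].
apply/forallP => x; apply/forallP => y; apply/implyP => xy; rewrite !ffunE.
have rxy : r x = r y by apply/fingraph.rootP => //; apply: connect1.
have sxy : s x = s y by rewrite /s rxy.
have npar := orth_rep_adj_npar xy.
case: ifP => xr; case: ifP => yr //.
  by case/negP: npar; rewrite (submx_trans xr) // rxy orth_rep_par_sym.
case: (par_r_or_s x); rewrite ?xr // => xs.
case: (par_r_or_s y); rewrite ?yr // => ys.
by case/negP: npar; rewrite (submx_trans xs) // sxy orth_rep_par_sym.
Qed.

End LocalityTwo.

Lemma colorable_widen (V : finType) (G : graph V) k l :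
  (k <= l)%N -> colorable G k -> colorable G l.
Proof.
move=> kl /existsP[f /forallP f_proper]; apply/existsP.
exists [ffun x => widen_ord kl (f x)]; apply/forallP => x; apply/forallP => y.
rewrite !ffunE; apply/implyP => /(implyP (forallP (f_proper x) y)).
by apply: contra => /eqP[/val_inj ->].
Qed.

Lemma chromatic_number_le (V : finType) (G : graph V) k :
  (chromatic_number G <= k)%N = colorable G k.
Proof.
rewrite /chromatic_number; case: ex_minnP => m Gm m_min.
by apply/idP/idP => [mk | /m_min]; [apply: colorable_widen mk Gm | ].
Qed.

Lemma colorable_xi_l_le (F : fieldType) (V : finType) (G : graph V) k :
  colorable G k -> xi_l_le F G k.
Proof.
move=> /existsP[f /forallP f_proper].
exists k, (fun v => delta_mx 0 (f v)); split; first split.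
- by move=> v; rewrite dotp_delta eqxx oner_neq0.
- by move=> v w vw; rewrite dotp_delta (negbTE (implyP (forallP (f_proper v) w) vw)).
- by apply/bigmax_leqP => v _; apply: rank_leq_col.
Qed.

Theorem mainTheorem6 (V : finType) (G : graph V) (F : fieldType) :
  (chromatic_number G <= 2)%N <-> xi_l_le F G 2.
Proof.
rewrite chromatic_number_le; split; first exact: colorable_xi_l_le.
by move=> [t [u [u_orth u_loc]]]; apply: locality2_colorable u_orth u_loc.
Qed.
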